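(* In the setting described in the context, for every $\boldsymbol{x}\in\mathbb{Z}_+^2$, $\Gamma\subset\mathcal{D}_{\boldsymbol{x}}$, and hence $\mathcal{D}\subset\mathcal{D}_{\boldsymbol{x}}$.
   Context: Let $S_0=\{1,\dots,s_0\}$ be finite and $\{\boldsymbol{Y}_n\}$ a Markov chain on $\mathbb{S}=\mathbb{Z}^2\times S_0$ with $\mathbb{P}(\boldsymbol{Y}_{n+1}=(x_1+k,x_2+l,j')\mid\boldsymbol{Y}_n=(x_1,x_2,j))=[A_{k,l}]_{j,j'}$ for $k,l\in\{-1,0,1\}$ (no other transitions), $A_{k,l}$ nonnegative $s_0\times s_0$ with $\sum A_{k,l}$ stochastic. Let $\mathbb{S}_+=\mathbb{Z}_+^2\times S_0$, $P_+$ the restriction of the transition matrix to $\mathbb{S}_+$, $\tau=\inf\{n\ge0:\boldsymbol{Y}_n\notin\mathbb{S}_+\}$, $\tilde q_{\boldsymbol{y},\boldsymbol{y}'}=\mathbb{E}\big(\sum_{n=0}^{\tau-1}1(\boldsymbol{Y}_n=\boldsymbol{y}')\mid\boldsymbol{Y}_0=\boldsymbol{y}\big)$. With $\boldsymbol\pi_{*,*}$ the stationary distribution of $\sum A_{k,l}$, $a_1=\boldsymbol{\pi}_{*,*}\sum_l(A_{1,l}-A_{-1,l})\mathbf{1}$, $a_2=\boldsymbol{\pi}_{*,*}\sum_k(A_{k,1}-A_{k,-1})\mathbf{1}$. Standing assumptions: $\{\boldsymbol Y_n\}$ irreducible and aperiodic; $a_1<0$ or $a_2<0$; $P_+$ irreducible.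 $\Phi_{\boldsymbol{x}}(\theta_1,\theta_2)$ is the $s_0\times s_0$ matrix with $(j,j')$ entry $\sum_{k_1,k_2\ge0}e^{k_1\theta_1+k_2\theta_2}\tilde q_{(\boldsymbol{x},j),(k_1,k_2,j')}$; $\mathcal{D}_{\boldsymbol{x}}$ is the interior of $\{(\theta_1,\theta_2):\Phi_{\boldsymbol{x}}(\theta_1,\theta_2)<\infty\text{ elementwise}\}$. $A_{*,*}(\theta_1,\theta_2)=\sum_{k,l}e^{k\theta_1+l\theta_2}A_{k,l}$, $\Gamma=\{(\theta_1,\theta_2)\in\mathbb{R}^2:\mathrm{spr}(A_{*,*}(\theta_1,\theta_2))<1\}$ (spr = spectral radius), and $\mathcal{D}=\{(\theta_1,\theta_2)\in\mathbb{R}^2:\exists(\theta_1',\theta_2')\in\Gamma\text{ with }\theta_1<\theta_1',\ \theta_2<\theta_2'\}$. *)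

From HB Require Import structures.
From mathcomp Require Import all_boot all_order all_algebra.
From mathcomp Require Import all_classical all_reals all_analysis.
From mathcomp Require Import complex.
Set Implicit Arguments. Unset Strict Implicit. Unset Printing Implicit Defensive.
Import Order.TTheory GRing.Theory Num.Theory.
Import numFieldNormedType.Exports.
Local Open Scope ring_scope.
Local Open Scope classical_set_scope.

Section QBD.
Variable R : realType.
Variable s0 : nat.
(* A k l is the paper's A_{k-1,l-1}, for k l : 'I_3 (i.e. k-1, l-1 in {-1,0,1}) *)
Variable A : 'I_3 -> 'I_3 -> 'M[R]_s0.

Definition shift (k : 'I_3) : int := (k%:Z - 1)%R.

Definition state := ((int * int) * 'I_s0)%type.

Definition in_Splus (y : state) : bool := (0 <= y.1.1) && (0 <= y.1.2).

Definition move (y : state) (k l : 'I_3) (j : 'I_s0) : state :=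
  ((y.1.1 + shift k, y.1.2 + shift l), j).

Definition trans (y z : state) : R :=
  \sum_(k : 'I_3) \sum_(l : 'I_3)
     (if z == move y k l z.2 then A k l y.2 z.2 else 0).

Fixpoint reach_in (S : state -> bool) (n : nat) (y z : state) : Prop :=
  match n with
  | 0 => S y /\ y = z
  | n'.+1 => S y /\ exists w, 0 < trans y w /\ reach_in S n' w z
  end.

Definition irreducible_chain : Prop :=
  forall y z : state, exists n, reach_in (fun _ => true) n y z.

Definition aperiodic_chain : Prop :=
  forall (y : state) (d : nat),
    (forall n, (0 < n)%N -> reach_in (fun _ => true) n y y -> (d %| n)%N) ->
    d = 1%N.

Definition irreducible_Pplus : Prop :=
  forall y z : state, in_Splus y -> in_Splus z ->
    exists n, reach_in in_Splus n y z.

(* taboo probability: P(Y_n = z, n < tau | Y_0 = y) *)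
Fixpoint taboo (n : nat) (y z : state) : R :=
  match n with
  | 0 => if in_Splus y && (y == z) then 1 else 0
  | n'.+1 => if in_Splus y then
      \sum_(k : 'I_3) \sum_(l : 'I_3) \sum_(j : 'I_s0)
         A k l y.2 j * taboo n' (move y k l j) z
      else 0
  end.

Definition qtilde (y z : state) : \bar R :=
  (\sum_(0 <= n <oo) (taboo n y z)%:E)%E.

Definition natstate (x : nat * nat) (j : 'I_s0) : state :=
  ((x.1%:Z, x.2%:Z), j).

Definition Phi (x : nat * nat) (theta : R * R) (j j' : 'I_s0) : \bar R :=
  \esum_(k in [set: nat * nat])
     ((expR (k.1%:R * theta.1 + k.2%:R * theta.2))%:E
       * qtilde (natstate x j) (natstate k j'))%E.

Definition Dx (x : nat * nat) : set (R * R) :=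
  interior ([set theta | forall j j', (Phi x theta j j' < +oo)%E] : set (prod R R)).

Definition Astar (theta : R * R) : 'M[R]_s0 :=
  \sum_(k : 'I_3) \sum_(l : 'I_3)
     expR ((shift k)%:~R * theta.1 + (shift l)%:~R * theta.2) *: A k l.

Definition Asum : 'M[R]_s0 := \sum_(k : 'I_3) \sum_(l : 'I_3) A k l.

Definition cplx_eigenvalues (M : 'M[R]_s0) : set (R[i]) :=
  [set z | root (char_poly (map_mx (fun r : R => (r%:C)%C) M)) z].

Definition spr (M : 'M[R]_s0) : R :=
  sup [set Normc.normc z | z in cplx_eigenvalues M].

Definition Gamma : set (R * R) := [set theta | spr (Astar theta) < 1].

Definition Dset : set (R * R) :=
  [set theta | exists2 theta', Gamma theta' &
                 theta.1 < theta'.1 /\ theta.2 < theta'.2].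

Definition is_stationary (pi : 'rV[R]_s0) (M : 'M[R]_s0) : Prop :=
  (forall j, 0 <= pi 0 j) /\ \sum_j pi 0 j = 1 /\ pi *m M = pi.

Definition drift1 (pi : 'rV[R]_s0) : R :=
  (pi *m (\sum_(l : 'I_3) (A (inord 2) l - A (inord 0) l)) *m (const_mx 1 : 'cV[R]_s0)) 0 0.
Definition drift2 (pi : 'rV[R]_s0) : R :=
  (pi *m (\sum_(k : 'I_3) (A k (inord 2) - A k (inord 0))) *m (const_mx 1 : 'cV[R]_s0)) 0 0.

End QBD.

From Pilot Require Import Defs.
From HB Require Import structures.
From mathcomp Require Import all_boot all_order all_algebra.
From mathcomp Require Import all_classical all_reals all_analysis.
From mathcomp Require Import complex ring lra.
Set Implicit Arguments. Unset Strict Implicit. Unset Printing Implicit Defensive.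
Import Order.TTheory GRing.Theory Num.Theory.
Import numFieldNormedType.Exports.
Local Open Scope ring_scope.
Local Open Scope classical_set_scope.

(* If spr A_{*,*}(th) < 1, Cayley-Hamilton over the complex numbers, together
   with |z| <= spr for every eigenvalue z, yields rho > 1 such that
   sum_m rho^m A_{*,*}(th)^m converges entrywise.  Unrolling the taboo
   recursion, the n-step taboo probabilities out of x, weighted by
   exp<th', y>, are at most exp<th', x> rho^n A_{*,*}(th)^n as soon as every
   one-step weight exp<th', (k,l)> is at most rho exp<th, (k,l)>; this holds
   for th' = th + (d, d) with 2d = ln rho.  So Phi_x is finite at a point
   strictly above each th in Gamma.  As Phi_x is monotone in th (the levels
   lie in the nonnegative quadrant), its finiteness domain is a lower set, and
   a point strictly below a point of a lower set is interior to it. *)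

Lemma bounded_series_of_contraction (R : realFieldType) (rho c K : R)
    (u v : nat -> R) :
  0 <= rho -> 0 <= c -> rho * c < 1 -> (forall m, 0 <= u m) ->
  (forall m, u m.+1 <= c * u m + v m) ->
  (forall N, \sum_(0 <= m < N) rho ^+ m * v m <= K) ->
  exists K', forall N, \sum_(0 <= m < N) rho ^+ m * u m <= K'.
Proof.
move=> rho0 c0 rc1 u0 u_rec v_bnd.
set S := fun N => \sum_(0 <= m < N) rho ^+ m * u m.
have S_mono N : S N <= S N.+1.
  by rewrite /S big_nat_recr //= lerDl mulr_ge0 ?exprn_ge0.
have S_rec N : S N.+1 <= u 0%N + rho * c * S N + rho * K.
  rewrite /S big_nat_recl //= expr0 mul1r -addrA lerD2l.
  apply: (@le_trans _ _ (\sum_(0 <= m < N)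
    (rho * c * (rho ^+ m * u m) + rho * (rho ^+ m * v m)))).
    apply: ler_sum => m _; apply: (@le_trans _ _ (rho ^+ m.+1 * (c * u m + v m))).
      by apply: ler_wpM2l (u_rec m); rewrite exprn_ge0.
    by rewrite exprS; lra.
  by rewrite big_split /= -!mulr_sumr lerD2l ler_wpM2l.
exists ((u 0%N + rho * K) / (1 - rho * c)) => N.
rewrite ler_pdivlMr ?subr_gt0 // -/(S N).
have := S_mono N; have := S_rec N; lra.
Qed.

Lemma normc_ge0 (R : rcfType) (z : R[i]) : 0 <= Normc.normc z.
Proof. by case: z => a b; exact: sqrtr_ge0. Qed.

Lemma annihilated_powers_summable (R : rcfType) n (M B : 'M[R[i]]_n) (rho : R)
    (r : seq R[i]) :
  0 <= rho -> (forall z, z \in r -> rho * Normc.normc z < 1) ->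
  (\prod_(z <- r) (M - z%:M)) *m B = 0 ->
  forall i j, exists K, forall N,
    \sum_(0 <= m < N) rho ^+ m * Normc.normc ((M ^+ m *m B) i j) <= K.
Proof.
move=> rho0; elim/last_ind: r B => [|r z IH] B r_small annB i j.
  rewrite big_nil mul1mx in annB; exists 0 => N.
  by rewrite big1 // => m _; rewrite annB mulmx0 mxE Normc.normc0 mulr0.
rewrite big_rcons /= -mulmxA in annB.
have r_small' w : w \in r -> rho * Normc.normc w < 1.
  by move=> wr; apply: r_small; rewrite mem_rcons in_cons wr orbT.
have [K bndK] := IH _ r_small' annB i j.
apply: (bounded_series_of_contraction rho0 (normc_ge0 z) _ _ _ bndK)
  => [|m|m].
- by apply: r_small; rewrite mem_rcons mem_head.
- exact: normc_ge0.
have -> : M ^+ m.+1 *m B = z *: (M ^+ m *m B) + M ^+ m *m ((M - z%:M) *m B).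
  by rewrite mulmxBl mul_scalar_mx mulmxBr -scalemxAr mulmxA exprSr addrC subrK.
by rewrite !mxE (le_trans (le_normcD _ _)) // Normc.normcM.
Qed.

Lemma eigenvalue_normc_le_spr (R : realType) n (M : 'M[R]_n) z :
  cplx_eigenvalues M z -> Normc.normc z <= spr M.
Proof.
set Mc := map_mx (fun r : R => r%:C%C) M.
have [rs Ers] := closed_field_poly_normal (char_poly Mc).
rewrite (monicP (char_poly_monic Mc)) scale1r in Ers.
have eig_rs w : cplx_eigenvalues M w -> w \in rs.
  by rewrite /cplx_eigenvalues /= -/Mc Ers root_prod_XsubC.
move=> eig_z; apply: sup_upper_bound; last by exists z.
split; first by exists (Normc.normc z), z.
exists (\big[Order.max/0]_(w <- rs) Normc.normc w) => _ [w /eig_rs w_rs <-].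
exact: le_bigmax_seq.
Qed.

Lemma normcR (R : rcfType) (x : R) : Normc.normc x%:C%C = `|x|.
Proof. by rewrite /Normc.normc /= expr0n /= addr0 sqrtr_sqr. Qed.

Lemma spr_lt1_powers_summable (R : realType) n (M : 'M[R]_n.+1) :
  spr M < 1 ->
  exists2 rho : R, 1 < rho & forall i j, exists K, forall N,
    \sum_(0 <= m < N) rho ^+ m * `|(M ^+ m) i j| <= K.
Proof.
move=> spr_lt1; set Mc := map_mx (fun r : R => r%:C%C) M.
have [rs Ers] := closed_field_poly_normal (char_poly Mc).
rewrite (monicP (char_poly_monic Mc)) scale1r in Ers.
set s := Num.max (spr M) 0.
have s_ge0 : 0 <= s by rewrite le_max lexx orbT.
have s_lt1 : s < 1 by rewrite gt_max spr_lt1 ltr01.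
have rho_ge0 : 0 <= 2 / (1 + s) by rewrite divr_ge0 //; lra.
exists (2 / (1 + s)); first by rewrite ltr_pdivlMr ?mul1r; lra.
have rs_small z : z \in rs -> 2 / (1 + s) * Normc.normc z < 1.
  move=> z_rs; have : Normc.normc z <= s.
    by rewrite le_max eigenvalue_normc_le_spr // /cplx_eigenvalues /= Ers root_prod_XsubC.
  rewrite mulrC mulrA ltr_pdivrMr; last lra.
  have := normc_ge0 z; nra.
have annihil : \prod_(z <- rs) (Mc - z%:M) *m 1%:M = 0.
  rewrite mulmx1 -(Cayley_Hamilton Mc) Ers rmorph_prod; apply: eq_bigr => z _.
  by rewrite rmorphB /= horner_mx_X horner_mx_C.
move=> i j; have [K bndK] := annihilated_powers_summable rho_ge0 rs_small annihil i j.
have entryE m : `|(M ^+ m) i j| = Normc.normc ((Mc ^+ m *m 1%:M) i j).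
  by rewrite mulmx1 -rmorphXn mxE normcR.
by exists K => N; under eq_bigr do rewrite entryE.
Qed.

Lemma mxpow_ge0 (R : numDomainType) n (M : 'M[R]_n) :
  (forall i j, 0 <= M i j) -> forall m i j, 0 <= (M ^+ m) i j.
Proof.
move=> M_ge0; elim=> [|m IH] i j; first by rewrite expr0 mxE ler0n.
by rewrite exprS mxE; apply: sumr_ge0 => k _; apply: mulr_ge0.
Qed.

Lemma sum_if_eq_inj_le (T U : eqType) (K : numDomainType) (g : T -> U)
    (F : seq T) (y : U) (c : K) :
  injective g -> uniq F -> 0 <= c ->
  \sum_(k <- F) (if y == g k then c else 0) <= c.
Proof.
move=> g_inj F_uniq c_ge0.
have count_le1 : (count (fun k => y == g k) F <= 1)%N.
  have -> : count (fun k => y == g k) F = count_mem y (map g F).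
    by rewrite count_map; apply: eq_count => k; rewrite /= eq_sym.
  by rewrite count_uniq_mem ?(map_inj_uniq g_inj) // leq_b1.
rewrite -big_mkcond big_const_seq iter_addr_0.
by case: (count _ _) count_le1 => [|[|//]] _; rewrite ?mulr0n ?mulr1n.
Qed.

Section WeightedTaboo.
Variables (R : realType) (s0 : nat) (A : 'I_3 -> 'I_3 -> 'M[R]_s0).
Hypothesis A_ge0 : forall k l i j, 0 <= A k l i j.

Definition state_weight (th : R * R) (y : state s0) : R :=
  expR (y.1.1%:~R * th.1 + y.1.2%:~R * th.2).

Definition step_weight (th : R * R) (k l : 'I_3) : R :=
  expR ((Defs.shift k)%:~R * th.1 + (Defs.shift l)%:~R * th.2).

Lemma state_weight_move th y k l j :
  state_weight th (move y k l j) = state_weight th y * step_weight th k l.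
Proof.
by rewrite /state_weight /step_weight /= !intrD -expRD; congr expR; ring.
Qed.

Lemma taboo_ge0 n y z : 0 <= taboo A n y z.
Proof.
elim: n y => [|n IH] y /=; first by case: ifP.
by case: ifP => // _; do 3 (apply: sumr_ge0 => ? _); exact: mulr_ge0.
Qed.

Lemma Astar_ge0 th i j : 0 <= Astar A th i j.
Proof.
rewrite /Astar summxE; apply: sumr_ge0 => k _; rewrite summxE.
by apply: sumr_ge0 => l _; rewrite mxE mulr_ge0 ?expR_ge0.
Qed.

Lemma Astar_mulmxE th (P : 'M[R]_s0) i j :
  (Astar A th *m P) i j =
  \sum_k \sum_l step_weight th k l * \sum_h A k l i h * P h j.
Proof.
rewrite /Astar mulmx_suml summxE; apply: eq_bigr => k _.
rewrite mulmx_suml summxE; apply: eq_bigr => l _.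
by rewrite -scalemxAl !mxE.
Qed.

Lemma weighted_taboo_le th th' rho : 0 <= rho ->
  (forall k l, step_weight th' k l <= rho * step_weight th k l) ->
  forall n y j' (F : seq (nat * nat)), uniq F ->
  \sum_(k <- F) state_weight th' (natstate k j') * taboo A n y (natstate k j')
    <= state_weight th' y * (rho ^+ n * (Astar A th ^+ n) y.2 j').
Proof.
move=> rho_ge0 step_le; elim=> [|n IH] y j' F F_uniq.
  have natstate_inj : injective (fun k => natstate k j').
    by move=> [a b] [c d] [/= -> ->].
  rewrite !expr0 mul1r mxE.
  apply: le_trans (sum_if_eq_inj_le y natstate_inj F_uniq _); last first.
    by rewrite mulr_ge0 ?expR_ge0 ?ler0n.
  apply: ler_sum => k _ /=; case: eqP => [->|_] /=; last by rewrite andbF mulr0.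
  by rewrite eqxx mulr1n ler_wpM2l ?expR_ge0 //; case: ifP.
have P_ge0 := mxpow_ge0 (Astar_ge0 th).
rewrite /=; case Splus_y: (in_Splus y); last first.
  rewrite big1 => [|k _]; last by rewrite mulr0.
  by rewrite mulr_ge0 ?expR_ge0 ?mulr_ge0 ?exprn_ge0 ?P_ge0.
have -> : state_weight th' y * (rho ^+ n.+1 * (Astar A th ^+ n.+1) y.2 j') =
    \sum_a \sum_b \sum_j A a b y.2 j *
      (state_weight th' y * (rho * step_weight th a b) *
       (rho ^+ n * (Astar A th ^+ n) j j')).
  rewrite exprS [Astar A th ^+ n.+1]exprS Astar_mulmxE mulrA mulr_sumr.
  apply: eq_bigr => a _; rewrite mulr_sumr; apply: eq_bigr => b _.
  rewrite mulrA mulr_sumr; apply: eq_bigr => j _; ring.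
under eq_bigr do rewrite mulr_sumr; rewrite exchange_big; apply: ler_sum => a _.
under eq_bigr do rewrite mulr_sumr; rewrite exchange_big; apply: ler_sum => b _.
under eq_bigr do rewrite mulr_sumr; rewrite exchange_big; apply: ler_sum => j _.
under eq_bigr do rewrite mulrCA.
rewrite -mulr_sumr ler_wpM2l //; apply: le_trans (IH _ _ _ F_uniq) _.
rewrite state_weight_move -!mulrA ler_wpM2l ?expR_ge0 //= (mulrA rho).
by rewrite ler_wpM2r ?mulr_ge0 ?exprn_ge0 ?P_ge0.
Qed.

Lemma Phi_le_weighted th th' rho K x j j' : 0 <= rho ->
  (forall k l, step_weight th' k l <= rho * step_weight th k l) ->
  (forall N, \sum_(0 <= m < N) rho ^+ m * (Astar A th ^+ m) j j' <= K) ->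
  (Phi A x th' j j' <= (state_weight th' (natstate x j) * K)%:E)%E.
Proof.
move=> rho_ge0 step_le bndK; have P_ge0 := mxpow_ge0 (Astar_ge0 th).
rewrite /Phi /esum; apply: ge_ereal_sup => _ [X [finX _] <-].
rewrite fsbig_finite //=; set F := finmap.enum_fset _.
have F_uniq : uniq F := finmap.fset_uniq _.
have seriesZ k : ((expR (k.1%:R * th'.1 + k.2%:R * th'.2))%:E *
    qtilde A (natstate x j) (natstate k j') = \sum_(0 <= n <oo)
    (state_weight th' (natstate k j') * taboo A n (natstate x j) (natstate k j'))%:E)%E.
  rewrite /qtilde -nneseriesZl => [|n _]; last by rewrite lee_fin taboo_ge0.
  by apply/congr_lim/funext => N; apply: eq_bigr => n _; rewrite EFinM.
rewrite (eq_bigr _ (fun k _ => seriesZ k)) -nneseries_sum => [|k n _]; last first.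
  by rewrite lee_fin mulr_ge0 ?expR_ge0 ?taboo_ge0.
apply: (@le_trans _ _ (\sum_(0 <= n <oo)
    (state_weight th' (natstate x j) * (rho ^+ n * (Astar A th ^+ n) j j'))%:E)%E).
  apply: lee_nneseries => [n _ _|n _]; rewrite sumEFin lee_fin.
    by apply: sumr_ge0 => k _; rewrite mulr_ge0 ?expR_ge0 ?taboo_ge0.
  exact: weighted_taboo_le.
apply: lime_le.
  by apply: is_cvg_nneseries => n _ _; rewrite lee_fin !mulr_ge0 ?expR_ge0 ?exprn_ge0.
by apply: nearW => N; rewrite sumEFin lee_fin -mulr_sumr ler_wpM2l ?expR_ge0.
Qed.

Lemma Phi_le th th' x j j' : th.1 <= th'.1 -> th.2 <= th'.2 ->
  (Phi A x th j j' <= Phi A x th' j j')%E.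
Proof.
move=> le1 le2; apply: le_esum => k _; apply: lee_wpmul2r.
  by apply: nneseries_ge0 => n _ _; rewrite lee_fin taboo_ge0.
by rewrite lee_fin ler_expR lerD // ler_wpM2l.
Qed.

Definition Phi_finite x : set (R * R) :=
  [set th | forall j j', (Phi A x th j j' < +oo)%E].

Lemma Phi_finite_lower x (p q : R * R) : p.1 <= q.1 -> p.2 <= q.2 ->
  Phi_finite x q -> Phi_finite x p.
Proof. by move=> le1 le2 fin_q j j'; exact: le_lt_trans (Phi_le x j j' le1 le2) _. Qed.

End WeightedTaboo.

Lemma interior_of_lower_set (R : realType) (S : set (R * R)) (a b : R * R) :
  (forall p q : R * R, p.1 <= q.1 -> p.2 <= q.2 -> S q -> S p) ->
  S b -> a.1 < b.1 -> a.2 < b.2 -> interior S a.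
Proof.
move=> S_lower Sb lt1 lt2; apply/nbhs_ballP.
exists (Num.min (b.1 - a.1) (b.2 - a.2)); first by rewrite /= lt_min !subr_gt0 lt1 lt2.
move=> p [/= p1 p2]; move: p1 p2; rewrite /ball /= !lt_min !ltr_distlC.
move=> /andP[/andP[_ p1] _] /andP[_ /andP[_ p2]].
by apply: S_lower Sb; apply: ltW; [move: p1 | move: p2]; rewrite addrC subrK.
Qed.

Lemma shift_le1 (R : numDomainType) (k : 'I_3) : (Defs.shift k)%:~R <= 1 :> R.
Proof. by rewrite -[X in _ <= X]/(1%:~R) ler_int; case: k => [[|[|[|//]]]]. Qed.

Lemma Gamma_below_Phi_finite (R : realType) n (A : 'I_3 -> 'I_3 -> 'M[R]_n.+1)
    x th :
  (forall k l i j, 0 <= A k l i j) -> Gamma A th ->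
  exists2 th' : R * R, Phi_finite A x th' &
    th.1 < th'.1 /\ th.2 < th'.2.
Proof.
move=> A_ge0 /spr_lt1_powers_summable [rho rho_gt1 bnd].
set d := ln rho / 2; have d_gt0 : 0 < d by rewrite divr_gt0 // ln_gt0.
have rho_gt0 : 0 < rho := lt_trans ltr01 rho_gt1.
exists (th.1 + d, th.2 + d); last by rewrite /= !ltrDl d_gt0.
move=> j j'; have [K bndK] := bnd j j'.
apply: le_lt_trans (Phi_le_weighted (th := th) (K := K) A_ge0 x (ltW rho_gt0) _ _) (ltry _).
  move=> k l; rewrite /step_weight -[X in _ <= X * _]lnK ?posrE // -expRD ler_expR /=.
  have := shift_le1 R k; have := shift_le1 R l.
  have : ln rho = d + d by rewrite /d -splitr.
  nra.
move=> N; apply: le_trans (bndK N); apply: ler_sum => m _.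
by rewrite ler_wpM2l ?exprn_ge0 ?(ltW rho_gt0) ?ler_norm.
Qed.

Theorem lemma4p3 (R : realType) (s0 : nat) (A : 'I_3 -> 'I_3 -> 'M[R]_s0)
  (pi : 'rV[R]_s0)
  (hs0 : (0 < s0)%N)
  (hA_nonneg : forall k l i j, 0 <= A k l i j)
  (hA_stoch : forall i, \sum_j Asum A i j = 1)
  (hirr : irreducible_chain A)
  (haper : aperiodic_chain A)
  (hpi : is_stationary pi (Asum A))
  (hdrift : drift1 A pi < 0 \/ drift2 A pi < 0)
  (hirrP : irreducible_Pplus A) :
  forall x : nat * nat, Gamma A `<=` Dx A x /\ Dset A `<=` Dx A x.
Proof.
(* Only the nonnegativity of the A_{k,l} matters for these inclusions. *)
move: A pi hs0 hA_nonneg {hA_stoch hirr haper hpi hdrift hirrP}.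
case: s0 => [//|n] A _ _ A_ge0 x; split=> th.
  move=> /(Gamma_below_Phi_finite x A_ge0) [th' fin' [lt1 lt2]].
  exact: interior_of_lower_set (Phi_finite_lower A_ge0 (x := x)) fin' lt1 lt2.
move=> [th' /(Gamma_below_Phi_finite x A_ge0) [th'' fin'' [lt1' lt2']] [lt1 lt2]].
exact: interior_of_lower_set (Phi_finite_lower A_ge0 (x := x)) fin''
  (lt_trans lt1 lt1') (lt_trans lt2 lt2').
Qed.
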